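(* If $\mathcal A$ is a finite non-associative algebra which has a qualitative representation, and $n$ is the number of atoms of $\mathcal A$, then $\mathcal A$ has a qualitative representation whose base has at most $3n^3$ points.
   Context: A non-associative algebra is an algebra $(A,0,1,+,-,1',\breve{\ },;)$ such that $(A,0,1,+,-)$ is a boolean algebra (with $x\cdot y=-(-x+-y)$ and $x\le y\iff x+y=y$); $1';x=x=x;1'$, $\breve{\breve x}=x$, $(x;y)\breve{}=\breve y;\breve x$; $\breve 0=x;0=0$, $(x+y)\breve{}=\breve x+\breve y$, $x;(y+z)=x;y+x;z$; and the Peircean law holds: $x;y\cdot\breve z=0$ iff $y;z\cdot\breve x=0$. An atom is a minimal nonzero element. A qualitative representation of $\mathcal A$ over base $D$ is an injective map $\phi:A\to\wp(D\times D)$ such that $0^\phi=\varnothing$, $1^\phi=D\times D$, $(1')^\phi=\{(x,x):x\in D\}$, $(a+b)^\phi=a^\phi\cup b^\phi$, $(-a)^\phi=(D\times D)\setminus a^\phi$, $(\breve a)^\phi=\{(y,x):(x,y)\in a^\phi\}$, and for all $a,b,c\in A$: $c^\phi\supseteq a^\phi\circ b^\phi\iff c\ge a;b$ (where $r\circ s$ is relational composition). *)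

From mathcomp Require Import all_boot.
Set Implicit Arguments. Unset Strict Implicit. Unset Printing Implicit Defensive.

(* Signature (A,0,1,+,-,1',conv,;) of a non-associative algebra. *)
Record naa_ops (A : Type) := NaaOps {
  nzero  : A;
  none   : A;
  nplus  : A -> A -> A;
  ncompl : A -> A;
  nident : A;
  nconv  : A -> A;
  ncomp  : A -> A -> A
}.

Section NAA.
Variables (A : eqType) (o : naa_ops A).

Definition nmeet (x y : A) : A := ncompl o (nplus o (ncompl o x) (ncompl o y)).
Definition nle (x y : A) : bool := nplus o x y == y.

Definition is_boolean_algebra : Prop :=
  ((forall x y z, nplus o x (nplus o y z) = nplus o (nplus o x y) z) /\
      (forall x y z, nmeet x (nmeet y z) = nmeet (nmeet x y) z) /\
      (forall x y, nplus o x y = nplus o y x) /\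
      (forall x y, nmeet x y = nmeet y x) /\
      (forall x y, nplus o x (nmeet x y) = x) /\
      (forall x y, nmeet x (nplus o x y) = x) /\
      (forall x y z, nmeet x (nplus o y z) = nplus o (nmeet x y) (nmeet x z)) /\
      (forall x, nplus o x (nzero o) = x /\ nmeet x (none o) = x) /\
      (forall x, nplus o x (ncompl o x) = none o /\ nmeet x (ncompl o x) = nzero o)).

Definition is_naa : Prop :=
  (is_boolean_algebra /\
      (forall x, ncomp o (nident o) x = x /\ ncomp o x (nident o) = x) /\
      (forall x, nconv o (nconv o x) = x) /\
      (forall x y, nconv o (ncomp o x y) = ncomp o (nconv o y) (nconv o x)) /\
      (forall x, nconv o (nzero o) = nzero o /\ ncomp o x (nzero o) = nzero o) /\
      (forall x y, nconv o (nplus o x y) = nplus o (nconv o x) (nconv o y)) /\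
      (forall x y z, ncomp o x (nplus o y z) = nplus o (ncomp o x y) (ncomp o x z)) /\
      (forall x y z, nmeet (ncomp o x y) (nconv o z) = nzero o <->
                     nmeet (ncomp o y z) (nconv o x) = nzero o)).

(* Binary relations on D as predicates; r = s as sets means pointwise iff. *)
Definition rcomp (D : Type) (r s : D -> D -> Prop) : D -> D -> Prop :=
  fun x z => exists y, r x y /\ s y z.

Definition qual_rep (D : Type) (phi : A -> D -> D -> Prop) : Prop :=
  ((forall a b, (forall x y, phi a x y <-> phi b x y) -> a = b) /\
      (forall x y, ~ phi (nzero o) x y) /\
      (forall x y, phi (none o) x y) /\
      (forall x y, phi (nident o) x y <-> x = y) /\
      (forall a b x y, phi (nplus o a b) x y <-> phi a x y \/ phi b x y) /\
      (forall a x y, phi (ncompl o a) x y <-> ~ phi a x y) /\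
      (forall a x y, phi (nconv o a) x y <-> phi a y x) /\
      (forall a b c, (forall x z, rcomp (phi a) (phi b) x z -> phi c x z)
                     <-> nle (ncomp o a b) c)).

End NAA.

Definition is_atom (A : finType) (o : naa_ops A) (a : A) : bool :=
  (a != nzero o) && [forall b : A, nle o b a ==> (b == nzero o) || (b == a)].

Definition natoms (A : finType) (o : naa_ops A) : nat :=
  #|[pred a : A | is_atom o a]|.

(* Every pair of points lies in the relation of some atom, and the
   relation of an atom is contained in that of every element sharing one of
   its edges.  Hence the restriction of [phi] to a subset [S] of [D] is again a
   qualitative representation as soon as every triangle of atoms [(x, y, z)]
   realised in [D] (points [p, q, r] with [x] on [pq], [y] on [qr], [z] on
   [pr]) is realised in [S]: inclusions of compositions are tested on such
   triangles.  Choosing one realising triangle for each of the at most [n^3]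
   realised triples of atoms gives such an [S] with at most [3 n^3] points. *)
From mathcomp Require Import all_boot.
From Stdlib Require Import ClassicalEpsilon.
Set Implicit Arguments. Unset Strict Implicit. Unset Printing Implicit Defensive.

Definition pbool (P : Prop) : bool :=
  if excluded_middle_informative P then true else false.

Lemma pboolP (P : Prop) : reflect P (pbool P).
Proof. by rewrite /pbool; case: excluded_middle_informative => h; constructor. Qed.

Lemma finite_image_injection (I : finType) (D : Type) (w : I -> D) :
  exists (E : finType) (f : E -> D),
    [/\ injective f, #|E| <= #|I| & forall i, exists e, f e = w i].
Proof.
pose rep (i : I) := [pick j | pbool (w j = w i)].
have rep_eq i j : w i = w j -> rep i = rep j by rewrite /rep => ->.
have rep_spec i : exists2 j, rep i = Some j & w j = w i.
  rewrite /rep; case: pickP => [j /pboolP wj | /(_ i) /pboolP]; last by [].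
  by exists j.
pose E := {i : I | rep i == Some i}.
exists E, (fun e : E => w (val e)); split.
- move=> [i ri] [j rj] /= wij; apply: val_inj; apply: Some_inj.
  by rewrite /= -(eqP ri) -(eqP rj); apply: rep_eq.
- by rewrite card_sig max_card.
- move=> i; have [j ri wj] := rep_spec i.
  have rj : rep j == Some j by rewrite (rep_eq j i wj) ri.
  by exists (exist _ j rj).
Qed.

Section QualRepLattice.
Variables (A : eqType) (o : naa_ops A) (D : Type) (phi : A -> D -> D -> Prop).
Hypothesis phi_rep : qual_rep o phi.

Lemma qual_rep_meet a b x y : phi (nmeet o a b) x y <-> phi a x y /\ phi b x y.
Proof.
have [_ [_ [_ [_ [phiD [phiC _]]]]]] := phi_rep.
by rewrite /nmeet phiC phiD !phiC; tauto.
Qed.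

Lemma qual_rep_le a b : nle o a b <-> forall x y, phi a x y -> phi b x y.
Proof.
have [phi_inj [_ [_ [_ [phiD _]]]]] := phi_rep.
rewrite /nle; split=> [/eqP <- x y ha | sub_ab]; first by apply/phiD; left.
by apply/eqP/phi_inj => x y; rewrite phiD; split=> [[/sub_ab|] | ]; auto.
Qed.

End QualRepLattice.

Section QualRepAtoms.
Variables (A : finType) (o : naa_ops A) (D : Type) (phi : A -> D -> D -> Prop).
Hypothesis phi_rep : qual_rep o phi.

Let phi_le := qual_rep_le phi_rep.
Let phi_meet := qual_rep_meet phi_rep.

(* An element [c] with [phi c p q] having the fewest elements below it is an
   atom: any nonzero [b < c] would give a smaller such element, either [b]
   itself or [c - b]. *)
Lemma qual_rep_atom_edge p q : exists2 c, is_atom o c & phi c p q.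
Proof.
have [phi_inj [phi0 [phi1 [_ [_ [phiC _]]]]]] := phi_rep.
have [c /pboolP cpq c_min] := @arg_minnP _ (none o) (fun c => pbool (phi c p q))
  (fun c => #|[pred y | nle o y c]|) (introT (pboolP _) (phi1 p q)).
have below_minimal b : nle o b c -> phi b p q -> nle o c b.
  move=> /phi_le le_bc bpq.
  have sub : [pred y | nle o y b] \subset [pred y | nle o y c].
    by apply/subsetP => y; rewrite !inE => /phi_le le_yb; apply/phi_le; auto.
  have card_eq : #|[pred y | nle o y b]| = #|[pred y | nle o y c]|.
    by apply/eqP; rewrite eqn_leq subset_leq_card //; apply/c_min/pboolP.
  by have := subset_cardP card_eq sub c; rewrite !inE => ->; apply/phi_le.
exists c => //; apply/andP; split.
  by apply/eqP => c0; apply: (phi0 p q); rewrite -c0.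
apply/forallP => b; apply/implyP => le_bc.
have /phi_le sub_bc := le_bc.
have [bpq | nbpq] := classic (phi b p q).
  have /phi_le sub_cb := below_minimal b le_bc bpq.
  have -> : b = c by apply: phi_inj => x y; split; auto.
  by rewrite eqxx orbT.
have le_diff : nle o (nmeet o c (ncompl o b)) c by apply/phi_le => x y /phi_meet [].
have diff_pq : phi (nmeet o c (ncompl o b)) p q by apply/phi_meet; split=> //; apply/phiC.
have /phi_le sub_cdiff := below_minimal _ le_diff diff_pq.
have -> : b = nzero o.
  apply: phi_inj => x y; split=> [bxy | /phi0 //].
  by have /phi_meet [_ /phiC] := sub_cdiff x y (sub_bc x y bxy).
by rewrite eqxx.
Qed.

Lemma qual_rep_atom_incl c a p q : is_atom o c -> phi c p q -> phi a p q ->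
  forall x y, phi c x y -> phi a x y.
Proof.
have [_ [phi0 _]] := phi_rep.
case/andP=> _ /forallP /(_ (nmeet o c a)) /implyP atom_c cpq apq.
have le_cac : nle o (nmeet o c a) c by apply/phi_le => x y /phi_meet [].
case/orP: (atom_c le_cac) => /eqP ca.
  by case: (phi0 p q); rewrite -ca; apply/phi_meet.
by move=> x y; rewrite -ca => /phi_meet [].
Qed.

Definition triangle (x y z : A) (t : D * D * D) : Prop :=
  [/\ phi x t.1.1 t.1.2, phi y t.1.2 t.2 & phi z t.1.1 t.2].

Definition triangle_closed (E : Type) (f : E -> D) : Prop :=
  forall x y z, is_atom o x -> is_atom o y -> is_atom o z ->
    (exists t, triangle x y z t) -> exists i j k, triangle x y z (f i, f j, f k).

Section Restriction.
Variables (E : Type) (f : E -> D).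
Hypotheses (f_inj : injective f) (f_closed : triangle_closed f).

Let psi a i j := phi a (f i) (f j).

Lemma restriction_comp_incl a b c :
  (forall i k, rcomp (psi a) (psi b) i k -> psi c i k) ->
  forall p r, rcomp (phi a) (phi b) p r -> phi c p r.
Proof.
move=> comp_abc p r [q [apq bqr]].
have [x atom_x xpq] := qual_rep_atom_edge p q.
have [y atom_y yqr] := qual_rep_atom_edge q r.
have [z atom_z zpr] := qual_rep_atom_edge p r.
have [i [j [k [/= xij yjk zik]]]] :
    exists i j k, triangle x y z (f i, f j, f k).
  by apply: f_closed => //; exists (p, q, r).
apply: qual_rep_atom_incl atom_z zik _ _ _ zpr.
apply: comp_abc; exists j; split.
- exact: qual_rep_atom_incl atom_x xpq apq _ _ xij.
- exact: qual_rep_atom_incl atom_y yqr bqr _ _ yjk.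
Qed.

(* The case [b := 1'] of [restriction_comp_incl]. *)
Lemma restriction_incl a b :
  (forall i j, psi a i j -> psi b i j) -> forall p q, phi a p q -> phi b p q.
Proof.
have [_ [_ [_ [phiI _]]]] := phi_rep.
move=> sub_ab p q apq.
apply: (restriction_comp_incl (a := a) (b := nident o)) => [i k [j [aij /phiI ejk]]|].
  by apply: sub_ab; rewrite /psi -ejk.
by exists q; split=> //; apply/phiI.
Qed.

Lemma qual_rep_restriction : qual_rep o psi.
Proof.
have [phi_inj [phi0 [phi1 [phiI [phiD [phiC [phiV phi_comp]]]]]]] := phi_rep.
rewrite /psi; split.
  by move=> a b eq_ab; apply: phi_inj => p q; split; apply: restriction_incl => i j /eq_ab.
split; first by move=> i j; apply: phi0.
split; first by move=> i j; apply: phi1.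
split; first by move=> i j; split=> [/phiI/f_inj | ->] //; apply/phiI.
split; first by move=> a b i j; apply: phiD.
split; first by move=> a i j; apply: phiC.
split; first by move=> a i j; apply: phiV.
move=> a b c; rewrite -phi_comp; split=> comp_abc.
  exact: restriction_comp_incl.
by move=> i k [j [aij bjk]]; apply: comp_abc; exists (f j).
Qed.

End Restriction.

Definition realised_triangles :=
  {s : {a | is_atom o a} * {a | is_atom o a} * {a | is_atom o a} |
     pbool (exists t, triangle (val s.1.1) (val s.1.2) (val s.2) t)}.

Definition triangle_witness (s : realised_triangles) : D * D * D :=
  proj1_sig (constructive_indefinite_description _ (elimT (pboolP _) (valP s))).

Lemma triangle_witnessP (s : realised_triangles) :
  triangle (val (val s).1.1) (val (val s).1.2) (val (val s).2) (triangle_witness s).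
Proof. exact: proj2_sig. Qed.

Definition corner (t : D * D * D) (k : 'I_3) : D :=
  match val k with 0 => t.1.1 | 1 => t.1.2 | _ => t.2 end.

Lemma small_triangle_closed_injection :
  exists (E : finType) (f : E -> D),
    [/\ injective f, #|E| <= 3 * natoms o ^ 3 & triangle_closed f].
Proof.
pose w (u : realised_triangles * 'I_3) := corner (triangle_witness u.1) u.2.
have [E [f [f_inj cardE f_onto]]] := finite_image_injection w.
exists E, f; split=> //.
  apply: leq_trans cardE _; rewrite card_prod card_ord mulnC leq_mul2l /=.
  rewrite card_sig (leq_trans (max_card _)) // !card_prod card_sig.
  by rewrite /natoms !expnS expn0 muln1 mulnA.
move=> x y z atom_x atom_y atom_z xyz.
pose s : realised_triangles :=
  exist _ (exist _ x atom_x, exist _ y atom_y, exist _ z atom_z) (introT (pboolP _) xyz).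
have [i fi] := f_onto (s, ord0).
have [j fj] := f_onto (s, Ordinal (isT : 1 < 3)).
have [k fk] := f_onto (s, Ordinal (isT : 2 < 3)).
by exists i, j, k; rewrite fi fj fk; case: (triangle_witnessP s).
Qed.

End QualRepAtoms.

Theorem mainTheorem6 (A : finType) (o : naa_ops A) :
  is_naa o ->
  (exists (D : Type) (phi : A -> D -> D -> Prop), qual_rep o phi) ->
  exists (D : finType) (phi : A -> D -> D -> Prop),
    qual_rep o phi /\ #|D| <= 3 * (natoms o) ^ 3.
Proof.
move=> _ [D [phi phi_rep]].
have [E [f [f_inj cardE f_closed]]] := small_triangle_closed_injection o phi.
exists E, (fun a i j => phi a (f i) (f j)); split=> //.
exact: qual_rep_restriction.
Qed.
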